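(* Let $A$ be a factorizable ribbon Hopf algebra with ribbon element $v$. Then for all $a\in A$, $\underline{S}^2(a)=S(v_{(1)})\,a\,v_{(2)}$, i.e. $\underline S^2$ is the right adjoint action of $v$.
   Context: Let $K$ be a field and $A$ a finite-dimensional Hopf algebra over $K$ with coproduct $\Delta(a)=a_{(1)}\otimes a_{(2)}$, counit $\varepsilon$ and bijective antipode $S$. $A$ is quasitriangular with R-matrix $R=R_1\otimes R_2$ ($R'$ a second copy): $R$ invertible, $\Delta^{\mathrm{cop}}(a)=R\Delta(a)R^{-1}$, $(\Delta\otimes\mathrm{id})(R)=R_{13}R_{23}$, $(\mathrm{id}\otimes\Delta)(R)=R_{13}R_{12}$. Monodromy matrix $Q=\tau(R)R=R_2R'_1\otimes R_1R'_2=Q_1\otimes Q_2$. Drinfel'd element $u=S(R_2)R_1$. A ribbon element (convention of this paper) is a central invertible $v\in A$ with $S(v)=v$, $\varepsilon(v)=1$, $v^2=(uS(u))^{-1}$ and $\Delta(v)=(v\otimes v)Q$. $A$ is factorizable if $A^*\to A$, $\varphi\mapsto\varphi(Q_1)Q_2$ is bijective. The transmutation antipode is $\underline{S}(a)=S\big(S(R_{1(1)})aR_{1(2)}\big)R_2$, equivalently $\underline{S}(a)=R_1S(a)S(R_2)S(u^{-1})$. *)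

(* A finite-dimensional Hopf algebra over a field K is
   presented in coordinates: A = K^n with basis e_0..e_{n-1}, elements of A
   are row vectors 'rV[K]_n, elements of A(x)A are n x n matrices
   (T i j = coefficient of e_i (x) e_j), elements of A(x)A(x)A are
   finite functions i |-> matrix (T i j k = coefficient of e_i(x)e_j(x)e_k). *)
From HB Require Import structures.
From mathcomp Require Import all_boot all_order all_algebra.
Set Implicit Arguments. Unset Strict Implicit. Unset Printing Implicit Defensive.
Import GRing.Theory.
Local Open Scope ring_scope.

Record HopfData (K : fieldType) (n : nat) := {
  hmul : 'I_n -> 'I_n -> 'rV[K]_n;
  hunit : 'rV[K]_n;
  hcop : 'I_n -> 'M[K]_n;
  hcounit : 'I_n -> K;
  hanti : 'I_n -> 'rV[K]_n
}.

Section Hopf.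
Variables (K : fieldType) (n : nat) (H : HopfData K n).

Notation A := 'rV[K]_n.
Notation A2 := 'M[K]_n.
Notation A3 := {ffun 'I_n -> 'M[K]_n}.

Definition ebas (i : 'I_n) : A := delta_mx 0 i.

Definition mulA (a b : A) : A :=
  \sum_(i < n) \sum_(j < n) (a 0 i * b 0 j) *: hmul H i j.
Definition oneA : A := hunit H.
Definition Delta (a : A) : A2 := \sum_(i < n) a 0 i *: hcop H i.
Definition eps (a : A) : K := \sum_(i < n) a 0 i * hcounit H i.
Definition Sant (a : A) : A := \sum_(i < n) a 0 i *: hanti H i.

Definition tens (x y : A) : A2 := x^T *m y.
Definition tens3 (x y z : A) : A3 := [ffun i => x 0 i *: tens y z].
(* M (x) z and x (x) M for M in A(x)A *)
Definition t2x (M : A2) (z : A) : A3 := [ffun i => (row i M)^T *m z].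
Definition xt2 (x : A) (M : A2) : A3 := [ffun i => x 0 i *: M].

Definition one2 : A2 := tens oneA oneA.
Definition mul2 (T U : A2) : A2 :=
  \sum_(i < n) \sum_(j < n) \sum_(k < n) \sum_(l < n)
     (T i j * U k l) *: tens (hmul H i k) (hmul H j l).
Definition mul3 (T U : A3) : A3 :=
  \sum_(i < n) \sum_(j < n) \sum_(k < n)
  \sum_(i' < n) \sum_(j' < n) \sum_(k' < n)
     (T i j k * U i' j' k') *: tens3 (hmul H i i') (hmul H j j') (hmul H k k').

Definition leg12 (T : A2) : A3 :=
  \sum_(i < n) \sum_(j < n) T i j *: tens3 (ebas i) (ebas j) oneA.
Definition leg13 (T : A2) : A3 :=
  \sum_(i < n) \sum_(j < n) T i j *: tens3 (ebas i) oneA (ebas j).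
Definition leg23 (T : A2) : A3 :=
  \sum_(i < n) \sum_(j < n) T i j *: tens3 oneA (ebas i) (ebas j).

Definition Delta_id (T : A2) : A3 :=
  \sum_(i < n) \sum_(j < n) T i j *: t2x (Delta (ebas i)) (ebas j).
Definition id_Delta (T : A2) : A3 :=
  \sum_(i < n) \sum_(j < n) T i j *: xt2 (ebas i) (Delta (ebas j)).

Definition is_hopf : Prop :=
  (forall a b c, mulA (mulA a b) c = mulA a (mulA b c))
  /\ (forall a, mulA oneA a = a /\ mulA a oneA = a)
  /\ (forall a, Delta_id (Delta a) = id_Delta (Delta a))
  /\ (forall a, \sum_(i < n) \sum_(j < n) (Delta a i j * eps (ebas i)) *: ebas j = a
              /\ \sum_(i < n) \sum_(j < n) (Delta a i j * eps (ebas j)) *: ebas i = a)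
  /\ ((forall a b, Delta (mulA a b) = mul2 (Delta a) (Delta b)) /\ Delta oneA = one2)
  /\ ((forall a b, eps (mulA a b) = eps a * eps b) /\ eps oneA = 1)
  /\ (forall a,
          \sum_(i < n) \sum_(j < n) Delta a i j *: mulA (Sant (ebas i)) (ebas j) = eps a *: oneA
       /\ \sum_(i < n) \sum_(j < n) Delta a i j *: mulA (ebas i) (Sant (ebas j)) = eps a *: oneA)
  /\ bijective Sant.

Definition quasitriangular (R : A2) : Prop :=
  (exists Rinv : A2,
      [/\ mul2 R Rinv = one2, mul2 Rinv R = one2
        & forall a, (Delta a)^T = mul2 (mul2 R (Delta a)) Rinv])
  /\ Delta_id R = mul3 (leg13 R) (leg23 R)
  /\ id_Delta R = mul3 (leg13 R) (leg12 R).

Definition monodromy (R : A2) : A2 := mul2 R^T R.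

Definition drinfeld_u (R : A2) : A :=
  \sum_(i < n) \sum_(j < n) R i j *: mulA (Sant (ebas j)) (ebas i).

Definition inverse_of (x y : A) : Prop := mulA x y = oneA /\ mulA y x = oneA.

(* ribbon element (convention of the paper) *)
Definition ribbon (R : A2) (v : A) : Prop :=
  (forall a, mulA v a = mulA a v)
  /\ (exists w, inverse_of v w)
  /\ Sant v = v
  /\ eps v = 1
  /\ inverse_of (mulA (drinfeld_u R) (Sant (drinfeld_u R))) (mulA v v)
  /\ Delta v = mul2 (tens v v) (monodromy R).

(* linear functionals on A (elements of the dual space), given by their values on the
   basis: phi(e_i) = phi 0 i *)
Definition dual_eval (phi : 'rV[K]_n) (x : A) : K := \sum_(i < n) phi 0 i * x 0 i.

Definition drinfeld_map (R : A2) (phi : 'rV[K]_n) : A :=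
  \sum_(i < n) \sum_(j < n) (monodromy R i j * dual_eval phi (ebas i)) *: ebas j.

Definition factorizable (R : A2) : Prop := bijective (drinfeld_map R).

(* transmutation antipode S_(a) = S( S(R_{1(1)}) a R_{1(2)} ) R_2 *)
Definition transm_S (R : A2) (a : A) : A :=
  \sum_(i < n) \sum_(j < n) R i j *:
    \sum_(k < n) \sum_(l < n) Delta (ebas i) k l *:
       mulA (Sant (mulA (mulA (Sant (ebas k)) a) (ebas l))) (ebas j).

Definition right_adj (v a : A) : A :=
  \sum_(i < n) \sum_(j < n) Delta v i j *: mulA (mulA (Sant (ebas i)) a) (ebas j).

End Hopf.

(* By (Delta (x) id)R = R_13 R_23, the transmutation antipode is
   S_(b) = S(R'_1) S(b) w R'_2  with  w = S^2(R_1) R_2 = S(u^-1) = v^2 u.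
   Since u x = S^2(x) u, conjugation by w also implements S^2, and S(w) w = v^2.
   Substituting S_ into itself and moving w past S^2(a) and S^2(R'_1) gives
   S_^2(a) = v^2 S(R_1) S(R'_2) a R'_1 R_2, which is S(v_(1)) a v_(2) because
   Delta(v) = (v (x) v) Q. *)
From Pilot Require Import Defs.
From HB Require Import structures.
From mathcomp Require Import all_boot all_order all_algebra.
From mathcomp Require Import ring.
Set Implicit Arguments. Unset Strict Implicit. Unset Printing Implicit Defensive.
Import GRing.Theory.
Local Open Scope ring_scope.

Section LinearFunctions.
Variable K : fieldType.
Implicit Types U V W : lmodType K.

Lemma linearf0 U V (f : U -> V) : linear f -> f 0 = 0.
Proof.
move=> hf; have h := hf 1 0 0; rewrite scaler0 add0r scale1r in h.
by apply: (addrI (f 0)); rewrite addr0 -h.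
Qed.

Lemma linearfD U V (f : U -> V) : linear f -> forall x y, f (x + y) = f x + f y.
Proof. by move=> hf x y; rewrite -[x]scale1r hf !scale1r. Qed.

Lemma linearfZ U V (f : U -> V) : linear f -> forall c x, f (c *: x) = c *: f x.
Proof. by move=> hf c x; rewrite -[c *: x]addr0 hf (linearf0 hf) addr0. Qed.

Lemma linearf_sum U V (f : U -> V) : linear f ->
  forall (I : Type) (r : seq I) (P : pred I) (F : I -> U),
  f (\sum_(i <- r | P i) F i) = \sum_(i <- r | P i) f (F i).
Proof. by move=> hf I r P F; apply: big_morph; [exact: linearfD | exact: linearf0]. Qed.

Lemma linearf_expand n V (f : 'rV[K]_n -> V) : linear f ->
  forall x, f x = \sum_(i < n) x 0 i *: f (delta_mx 0 i).
Proof.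
move=> hf x; rewrite {1}(row_sum_delta x) (linearf_sum hf).
by apply: eq_bigr => i _; rewrite (linearfZ hf).
Qed.

Lemma linearf_id U : linear (fun x : U => x).
Proof. by []. Qed.

Lemma linearf_comp U V W (F : U -> V) (G : V -> W) :
  linear F -> linear G -> linear (fun x => G (F x)).
Proof. by move=> hF hG c x y; rewrite hF hG. Qed.

Lemma linearf_scale U V (F : U -> V) (a : K) : linear F -> linear (fun x => a *: F x).
Proof. by move=> hF c x y; rewrite hF scalerDr !scalerA mulrC. Qed.

End LinearFunctions.

Section Coordinates.
Variables (K : fieldType) (n : nat) (H : HopfData K n).
Implicit Types U V W : lmodType K.
Local Notation A := 'rV[K]_n.
Local Notation A3 := {ffun 'I_n -> 'M[K]_n}.
Local Notation m := (Defs.mulA H).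
Local Notation S := (Sant H).
Local Notation D := (Delta H).
Local Notation ep := (eps H).
Local Notation one := (oneA H).
Local Notation e := (@ebas K n).

Lemma linear_mulAl U (F : U -> A) z : linear F -> linear (fun x => m (F x) z).
Proof.
move=> hF; apply: (linearf_comp (G := fun x => m x z) hF) => c x y.
rewrite /Defs.mulA scaler_sumr -big_split; apply: eq_bigr => i _.
rewrite scaler_sumr -big_split; apply: eq_bigr => j _ /=.
by rewrite !mxE scalerA -scalerDl; congr (_ *: _); ring.
Qed.

Lemma linear_mulAr U (F : U -> A) z : linear F -> linear (fun x => m z (F x)).
Proof.
move=> hF; apply: (linearf_comp (G := fun x => m z x) hF) => c x y.
rewrite /Defs.mulA scaler_sumr -big_split; apply: eq_bigr => i _.
rewrite scaler_sumr -big_split; apply: eq_bigr => j _ /=.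
by rewrite !mxE scalerA -scalerDl; congr (_ *: _); ring.
Qed.

Lemma linear_Sant : linear S.
Proof.
move=> c x y; rewrite /Sant scaler_sumr -big_split; apply: eq_bigr => i _ /=.
by rewrite !mxE scalerA -scalerDl.
Qed.

Lemma linear_Delta : linear D.
Proof.
move=> c x y; rewrite /Delta scaler_sumr -big_split; apply: eq_bigr => i _ /=.
by rewrite !mxE scalerA -scalerDl.
Qed.

Lemma linear_eps_scale U V (F : U -> A) (z : V) : linear F -> linear (fun x => ep (F x) *: z).
Proof.
move=> hF c x y; rewrite hF scalerA -scalerDl; congr (_ *: _).
by rewrite /eps mulr_sumr -big_split; apply: eq_bigr => i _ /=; rewrite !mxE; ring.
Qed.

Lemma ebasE i j : e i 0 j = (i == j)%:R.
Proof. by rewrite /ebas mxE eqxx /= eq_sym. Qed.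

Lemma mulA_ebas i j : m (e i) (e j) = hmul H i j.
Proof.
have sum_ebas V k (F : 'I_n -> V) : \sum_(l < n) e k 0 l *: F l = F k.
  rewrite (bigD1 k) //= ebasE eqxx scale1r big1 ?addr0 // => l nkl.
  by rewrite ebasE eq_sym (negbTE nkl) scale0r.
rewrite /Defs.mulA -(sum_ebas _ i (fun k => hmul H k j)); apply: eq_bigr => k _.
rewrite -(sum_ebas _ j (hmul H k)) scaler_sumr.
by apply: eq_bigr => l _; rewrite scalerA.
Qed.

Lemma tensE (x y : A) i j : tens x y i j = x 0 i * y 0 j.
Proof. by rewrite /tens !mxE big_ord1 !mxE. Qed.

Lemma linear_tensl U (F : U -> A) z : linear F -> linear (fun x => tens (F x) z).
Proof.
move=> hF; apply: (linearf_comp (G := fun x => tens x z) hF) => c x y.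
by apply/matrixP => i j; rewrite !(tensE, mxE); ring.
Qed.

Lemma linear_tensr U (F : U -> A) z : linear F -> linear (fun x => tens z (F x)).
Proof.
move=> hF; apply: (linearf_comp (G := fun x => tens z x) hF) => c x y.
by apply/matrixP => i j; rewrite !(tensE, mxE); ring.
Qed.

Lemma mulAZl (c : K) (x z : A) : m (c *: x) z = c *: m x z.
Proof. exact: (linearfZ (linear_mulAl z (@linearf_id _ A)) c x). Qed.

Lemma mulAZr (c : K) (x z : A) : m z (c *: x) = c *: m z x.
Proof. exact: (linearfZ (linear_mulAr z (@linearf_id _ A)) c x). Qed.

Lemma tensZl (c : K) (x z : A) : tens (c *: x) z = c *: tens x z.
Proof. exact: (linearfZ (linear_tensl z (@linearf_id _ A)) c x). Qed.

Lemma tensZr (c : K) (x z : A) : tens z (c *: x) = c *: tens z x.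
Proof. exact: (linearfZ (linear_tensr z (@linearf_id _ A)) c x). Qed.

(* [eval2 T f] is f(T_1, T_2) in Sweedler-like notation: the bilinear f applied to the tensor T. *)
Definition eval2 V (T : 'M[K]_n) (f : A -> A -> V) : V :=
  \sum_(i < n) \sum_(j < n) T i j *: f (e i) (e j).

Definition bilin V (f : A -> A -> V) :=
  (forall y, linear (fun x => f x y)) /\ (forall x, linear (fun y => f x y)).

Lemma eq_eval2 V T (f g : A -> A -> V) :
  (forall x y, f x y = g x y) -> eval2 T f = eval2 T g.
Proof. by move=> fg; apply: eq_bigr => i _; apply: eq_bigr => j _; rewrite fg. Qed.

Lemma linear_eval2_tensor V (f : A -> A -> V) : linear (fun T => eval2 T f).
Proof.
move=> c T T'; rewrite /eval2 scaler_sumr -big_split; apply: eq_bigr => i _ /=.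
rewrite scaler_sumr -big_split; apply: eq_bigr => j _ /=.
by rewrite !mxE scalerDl scalerA.
Qed.

Lemma linear_eval2 U V (F : U -> 'M[K]_n) (f : A -> A -> V) :
  linear F -> linear (fun x => eval2 (F x) f).
Proof. by move=> hF; exact: linearf_comp hF (linear_eval2_tensor f). Qed.

Lemma eval2_sum V (f : A -> A -> V) (I : Type) (r : seq I) (P : pred I) F :
  eval2 (\sum_(i <- r | P i) F i) f = \sum_(i <- r | P i) eval2 (F i) f.
Proof. exact: (linearf_sum (linear_eval2_tensor f) r P F). Qed.

Lemma eval2Z V (f : A -> A -> V) c T : eval2 (c *: T) f = c *: eval2 T f.
Proof. exact: (linearfZ (linear_eval2_tensor f) c T). Qed.

Lemma linear_eval2_fun U V T (g : U -> A -> A -> V) :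
  (forall p q, linear (fun x => g x p q)) -> linear (fun x => eval2 T (g x)).
Proof.
move=> hg c x y; rewrite /eval2 scaler_sumr -big_split; apply: eq_bigr => i _ /=.
rewrite scaler_sumr -big_split; apply: eq_bigr => j _ /=.
by rewrite hg scalerDr !scalerA mulrC.
Qed.

Lemma eval2_comp V W (F : V -> W) T (f : A -> A -> V) :
  linear F -> F (eval2 T f) = eval2 T (fun x y => F (f x y)).
Proof.
move=> hF; rewrite /eval2 (linearf_sum hF); apply: eq_bigr => i _.
by rewrite (linearf_sum hF); apply: eq_bigr => j _; rewrite (linearfZ hF).
Qed.

Lemma eval2C V T T' (f : A -> A -> A -> A -> V) :
  eval2 T (fun x y => eval2 T' (fun p q => f x y p q)) =
  eval2 T' (fun p q => eval2 T (fun x y => f x y p q)).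
Proof.
rewrite /eval2.
transitivity (\sum_(i < n) \sum_(j < n) \sum_(k < n) \sum_(l < n)
   (T i j * T' k l) *: f (e i) (e j) (e k) (e l)).
  apply: eq_bigr => i _; apply: eq_bigr => j _; rewrite scaler_sumr.
  by apply: eq_bigr => k _; rewrite scaler_sumr; apply: eq_bigr => l _; rewrite scalerA.
under eq_bigr => i _ do rewrite exchange_big.
rewrite exchange_big; apply: eq_bigr => k _.
under eq_bigr => i _ do rewrite exchange_big.
rewrite exchange_big; apply: eq_bigr => l _; rewrite scaler_sumr.
apply: eq_bigr => i _; rewrite scaler_sumr; apply: eq_bigr => j _.
by rewrite scalerA mulrC.
Qed.

Lemma eval2_tens V (f : A -> A -> V) x y : bilin f -> eval2 (tens x y) f = f x y.
Proof.
case=> hl hr; rewrite /eval2 (linearf_expand (hl y) x); apply: eq_bigr => i _.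
rewrite (linearf_expand (hr (delta_mx 0 i)) y) scaler_sumr; apply: eq_bigr => j _.
by rewrite tensE scalerA.
Qed.

Lemma eval2_tensK T : eval2 T (@tens K n) = T.
Proof.
rewrite {2}(matrix_sum_delta T); apply: eq_bigr => i _; apply: eq_bigr => j _.
congr (_ *: _); apply/matrixP => a b.
by rewrite tensE !ebasE mxE (eq_sym a) (eq_sym b) -natrM mulnb.
Qed.

Lemma eval2_tr V T (f : A -> A -> V) : eval2 T^T f = eval2 T (fun x y => f y x).
Proof.
by rewrite /eval2 exchange_big /=; apply: eq_bigr => i _; apply: eq_bigr => j _; rewrite mxE.
Qed.

Lemma eval2_mul2 V T T' (f : A -> A -> V) : bilin f ->
  eval2 (mul2 H T T') f = eval2 T (fun x y => eval2 T' (fun x' y' => f (m x x') (m y y'))).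
Proof.
move=> hf; rewrite /mul2 eval2_sum [in RHS]/eval2; apply: eq_bigr => i _.
rewrite eval2_sum; apply: eq_bigr => j _; rewrite eval2_sum scaler_sumr.
apply: eq_bigr => k _; rewrite eval2_sum scaler_sumr; apply: eq_bigr => l _.
by rewrite eval2Z eval2_tens // scalerA !mulA_ebas.
Qed.

Lemma linear_bilinl U V (f : A -> A -> V) (F : U -> A) z :
  bilin f -> linear F -> linear (fun x => f (F x) z).
Proof. by case=> hl _ hF; exact: linearf_comp hF (hl z). Qed.

Lemma linear_bilinr U V (f : A -> A -> V) (F : U -> A) z :
  bilin f -> linear F -> linear (fun x => f z (F x)).
Proof. by case=> _ hr hF; exact: linearf_comp hF (hr z). Qed.

Lemma bilin_tens : bilin (@tens K n).
Proof. by split=> z; [exact: linear_tensl | exact: linear_tensr]. Qed.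

Lemma eval2_one2 V (f : A -> A -> V) : bilin f -> eval2 (one2 H) f = f one one.
Proof. exact: eval2_tens. Qed.

Lemma eval2_inj T T' :
  (forall f : A -> A -> 'M[K]_n, bilin f -> eval2 T f = eval2 T' f) -> T = T'.
Proof. by move=> h; rewrite -(eval2_tensK T) -(eval2_tensK T') h //; exact: bilin_tens. Qed.

Definition eval3 V (X : A3) (g : A -> A -> A -> V) : V :=
  \sum_(i < n) \sum_(j < n) \sum_(k < n) X i j k *: g (e i) (e j) (e k).

Definition trilin V (g : A -> A -> A -> V) :=
  [/\ forall y z, linear (fun x => g x y z), forall x z, linear (fun y => g x y z)
    & forall x y, linear (fun z => g x y z)].

Lemma linear_eval3 V (g : A -> A -> A -> V) : linear (fun X => eval3 X g).
Proof.
move=> c X Y; rewrite /eval3 scaler_sumr -big_split; apply: eq_bigr => i _ /=.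
rewrite scaler_sumr -big_split; apply: eq_bigr => j _ /=.
rewrite scaler_sumr -big_split; apply: eq_bigr => k _ /=.
by rewrite !ffunE !mxE scalerDl scalerA.
Qed.

Lemma eval3_sum V (g : A -> A -> A -> V) (I : Type) (r : seq I) (P : pred I) F :
  eval3 (\sum_(i <- r | P i) F i) g = \sum_(i <- r | P i) eval3 (F i) g.
Proof. exact: (linearf_sum (linear_eval3 g) r P F). Qed.

Lemma eval3Z V (g : A -> A -> A -> V) c X : eval3 (c *: X) g = c *: eval3 X g.
Proof. exact: (linearfZ (linear_eval3 g) c X). Qed.

Lemma eval3_tens3 V (g : A -> A -> A -> V) x y z :
  trilin g -> eval3 (tens3 x y z) g = g x y z.
Proof.
case=> h1 h2 h3; rewrite /eval3 (linearf_expand (h1 y z) x); apply: eq_bigr => i _.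
rewrite (linearf_expand (h2 (delta_mx 0 i) z) y) scaler_sumr; apply: eq_bigr => j _.
rewrite (linearf_expand (h3 (delta_mx 0 i) (delta_mx 0 j)) z) !scaler_sumr.
by apply: eq_bigr => k _; rewrite /tens3 ffunE mxE tensE !scalerA mulrA.
Qed.

Lemma eval3_mul3 V (g : A -> A -> A -> V) X Y : trilin g ->
  eval3 (mul3 H X Y) g =
  eval3 X (fun a b c => eval3 Y (fun a' b' c' => g (m a a') (m b b') (m c c'))).
Proof.
move=> hg; rewrite /mul3 eval3_sum [in RHS]/eval3; apply: eq_bigr => i _.
do 2 (rewrite eval3_sum; apply: eq_bigr => ? _).
do 3 (rewrite eval3_sum scaler_sumr; apply: eq_bigr => ? _).
by rewrite eval3Z eval3_tens3 // scalerA !mulA_ebas.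
Qed.

Lemma eval3_leg13 V (g : A -> A -> A -> V) T : trilin g ->
  eval3 (leg13 H T) g = eval2 T (fun x y => g x one y).
Proof.
move=> hg; rewrite /leg13 eval3_sum; apply: eq_bigr => i _.
by rewrite eval3_sum; apply: eq_bigr => j _; rewrite eval3Z eval3_tens3.
Qed.

Lemma eval3_leg12 V (g : A -> A -> A -> V) T : trilin g ->
  eval3 (leg12 H T) g = eval2 T (fun x y => g x y one).
Proof.
move=> hg; rewrite /leg12 eval3_sum; apply: eq_bigr => i _.
by rewrite eval3_sum; apply: eq_bigr => j _; rewrite eval3Z eval3_tens3.
Qed.

Lemma eval3_leg23 V (g : A -> A -> A -> V) T : trilin g ->
  eval3 (leg23 H T) g = eval2 T (fun x y => g one x y).
Proof.
move=> hg; rewrite /leg23 eval3_sum; apply: eq_bigr => i _.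
by rewrite eval3_sum; apply: eq_bigr => j _; rewrite eval3Z eval3_tens3.
Qed.

Lemma eval3_t2x V (g : A -> A -> A -> V) M z : trilin g ->
  eval3 (t2x M z) g = eval2 M (fun p q => g p q z).
Proof.
case=> _ _ h3; rewrite /eval3 /eval2; apply: eq_bigr => a _; apply: eq_bigr => b _.
rewrite (linearf_expand (h3 (e a) (e b)) z) scaler_sumr; apply: eq_bigr => c _.
by rewrite /t2x ffunE !mxE big_ord1 !mxE scalerA.
Qed.

Lemma eval3_xt2 V (g : A -> A -> A -> V) x M : trilin g ->
  eval3 (xt2 x M) g = eval2 M (fun p q => g x p q).
Proof.
case=> h1 _ _; rewrite /eval3 /eval2.
transitivity (\sum_(b < n) \sum_(c < n) \sum_(a < n) (x 0 a * M b c) *: g (e a) (e b) (e c)).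
  rewrite exchange_big /=; apply: eq_bigr => b _.
  rewrite exchange_big /=; apply: eq_bigr => c _.
  by apply: eq_bigr => a _; rewrite /xt2 ffunE mxE.
apply: eq_bigr => b _; apply: eq_bigr => c _.
rewrite (linearf_expand (h1 (e b) (e c)) x) scaler_sumr; apply: eq_bigr => a _.
by rewrite scalerA mulrC.
Qed.

Lemma eval3_Delta_id V (g : A -> A -> A -> V) T : trilin g ->
  eval3 (Delta_id H T) g = eval2 T (fun x y => eval2 (D x) (fun p q => g p q y)).
Proof.
move=> hg; rewrite /Delta_id eval3_sum; apply: eq_bigr => i _.
by rewrite eval3_sum; apply: eq_bigr => j _; rewrite eval3Z eval3_t2x.
Qed.

Lemma eval3_id_Delta V (g : A -> A -> A -> V) T : trilin g ->
  eval3 (id_Delta H T) g = eval2 T (fun x y => eval2 (D y) (fun p q => g x p q)).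
Proof.
move=> hg; rewrite /id_Delta eval3_sum; apply: eq_bigr => i _.
by rewrite eval3_sum; apply: eq_bigr => j _; rewrite eval3Z eval3_xt2.
Qed.

Lemma linear_eval3_fun U V X (g : U -> A -> A -> A -> V) :
  (forall p q r, linear (fun x => g x p q r)) -> linear (fun x => eval3 X (g x)).
Proof.
move=> hg c x y; rewrite /eval3 scaler_sumr -big_split; apply: eq_bigr => i _ /=.
rewrite scaler_sumr -big_split; apply: eq_bigr => j _ /=.
rewrite scaler_sumr -big_split; apply: eq_bigr => k _ /=.
by rewrite hg scalerDr !scalerA mulrC.
Qed.

Lemma linear_trilin1 U V (g : A -> A -> A -> V) (F : U -> A) y z :
  trilin g -> linear F -> linear (fun x => g (F x) y z).
Proof. by case=> h1 _ _ hF; exact: linearf_comp hF (h1 y z). Qed.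

Lemma linear_trilin2 U V (g : A -> A -> A -> V) (F : U -> A) x z :
  trilin g -> linear F -> linear (fun y => g x (F y) z).
Proof. by case=> _ h2 _ hF; exact: linearf_comp hF (h2 x z). Qed.

Lemma linear_trilin3 U V (g : A -> A -> A -> V) (F : U -> A) x y :
  trilin g -> linear F -> linear (fun z => g x y (F z)).
Proof. by case=> _ _ h3 hF; exact: linearf_comp hF (h3 x y). Qed.

Section HopfAxioms.

Variable Sinv : A -> A.
Hypotheses (SantK : cancel S Sinv) (SinvK : cancel Sinv S).

Lemma linear_Sinv : linear Sinv.
Proof. by move=> c x y; apply: (can_inj SantK); rewrite linear_Sant !SinvK. Qed.

Ltac linear_step := first
 [ apply: linearf_id
 | apply: linear_mulAl | apply: linear_mulAr
 | apply: (linearf_comp _ linear_Sant) | apply: (linearf_comp _ linear_Sinv)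
 | apply: (linearf_comp _ linear_Delta)
 | apply: linear_tensl | apply: linear_tensr | apply: linear_eps_scale | apply: linearf_scale
 | apply: linear_eval2
 | (apply: linear_eval2_fun; intros ??; cbv beta)
 | (apply: linear_eval3_fun; intros ???; cbv beta)
 | (apply: linear_bilinl; first eassumption) | (apply: linear_bilinr; first eassumption)
 | (apply: linear_trilin1; first eassumption) | (apply: linear_trilin2; first eassumption)
 | (apply: linear_trilin3; first eassumption) ].

Ltac linearity := repeat match goal with
 | |- bilin _ => split; intro; cbv beta
 | |- trilin _ => split; intros ??; cbv beta
 | |- forall _, _ => intro; cbv beta
 | |- linear _ => linear_step
 end.

Hypothesis mulAA : forall a b c, m (m a b) c = m a (m b c).
Hypothesis mul1A : forall a, m one a = a.
Hypothesis mulA1 : forall a, m a one = a.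
Hypothesis Delta_coassoc : forall a, Delta_id H (D a) = id_Delta H (D a).
Hypothesis counitl : forall a, \sum_(i < n) \sum_(j < n) (D a i j * ep (e i)) *: e j = a.
Hypothesis counitr : forall a, \sum_(i < n) \sum_(j < n) (D a i j * ep (e j)) *: e i = a.
Hypothesis DeltaM : forall a b, D (m a b) = mul2 H (D a) (D b).
Hypothesis Delta1 : D one = one2 H.
Hypothesis epsM : forall a b, ep (m a b) = ep a * ep b.
Hypothesis eps1 : ep one = 1.
Hypothesis antipodel : forall a, eval2 (D a) (fun x y => m (S x) y) = ep a *: one.
Hypothesis antipoder : forall a, eval2 (D a) (fun x y => m x (S y)) = ep a *: one.

Lemma eval2_counitl V a (G : A -> V) : linear G ->
  eval2 (D a) (fun x y => ep x *: G y) = G a.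
Proof.
move=> hG; have counitlE : eval2 (D a) (fun x y => ep x *: y) = a.
  by rewrite -{2}(counitl a); apply: eq_bigr => i _; apply: eq_bigr => j _; rewrite scalerA.
by rewrite -{2}counitlE (eval2_comp _ _ hG); apply: eq_eval2 => x y; rewrite (linearfZ hG).
Qed.

Lemma eval2_counitr V a (G : A -> V) : linear G ->
  eval2 (D a) (fun x y => ep y *: G x) = G a.
Proof.
move=> hG; have counitrE : eval2 (D a) (fun x y => ep y *: x) = a.
  by rewrite -{2}(counitr a); apply: eq_bigr => i _; apply: eq_bigr => j _; rewrite scalerA.
by rewrite -{2}counitrE (eval2_comp _ _ hG); apply: eq_eval2 => x y; rewrite (linearfZ hG).
Qed.

Lemma eval2_antipodel V a (G : A -> V) : linear G ->
  eval2 (D a) (fun x y => G (m (S x) y)) = ep a *: G one.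
Proof. by move=> hG; rewrite -(eval2_comp _ _ hG) antipodel (linearfZ hG). Qed.

Lemma eval2_antipoder V a (G : A -> V) : linear G ->
  eval2 (D a) (fun x y => G (m x (S y))) = ep a *: G one.
Proof. by move=> hG; rewrite -(eval2_comp _ _ hG) antipoder (linearfZ hG). Qed.

Lemma eval2_coassoc V a (g : A -> A -> A -> V) : trilin g ->
  eval2 (D a) (fun x y => eval2 (D x) (fun p q => g p q y)) =
  eval2 (D a) (fun x y => eval2 (D y) (fun p q => g x p q)).
Proof. by move=> hg; rewrite -eval3_Delta_id // Delta_coassoc eval3_id_Delta. Qed.

Lemma Sant1 : S one = one.
Proof.
have := antipodel one; rewrite Delta1 eval2_one2; last by linearity.
by rewrite mulA1 eps1 scale1r.
Qed.

(* The convolution product (S o m) * m * (m^op o (S (x) S)) evaluated at x (x) y; collapsing it from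
   the right gives S(xy), from the left S(y)S(x). *)
Definition antipode_conv x y :=
  eval2 (D x) (fun x1 x' => eval2 (D x') (fun x2 x3 =>
  eval2 (D y) (fun y1 y' => eval2 (D y') (fun y2 y3 =>
    m (m (S (m x1 y1)) (m x2 y2)) (m (S y3) (S x3)))))).

Lemma antipode_conv_Smul x y : antipode_conv x y = S (m x y).
Proof.
rewrite /antipode_conv.
transitivity (eval2 (D x) (fun x1 x' =>
    eval2 (D x') (fun x2 x3 => m (S (m x1 y)) (m x2 (S x3))))).
  apply: eq_eval2 => x1 x'; apply: eq_eval2 => x2 x3.
  transitivity (eval2 (D y) (fun y1 y' =>
      ep y' *: (fun z => m (S (m x1 z)) (m x2 (S x3))) y1)).
    apply: eq_eval2 => y1 y'.
    transitivity (eval2 (D y') (fun y2 y3 =>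
        (fun z => m (S (m x1 y1)) (m x2 (m z (S x3)))) (m y2 (S y3)))).
      by apply: eq_eval2 => y2 y3; rewrite !mulAA.
    by rewrite (eval2_antipoder _ (G := fun z => m (S (m x1 y1)) (m x2 (m z (S x3)))))
      ?mul1A //; linearity.
  by rewrite (eval2_counitr _ (G := fun z => m (S (m x1 z)) (m x2 (S x3)))) //; linearity.
transitivity (eval2 (D x) (fun x1 x' => ep x' *: (fun z => S (m z y)) x1)).
  apply: eq_eval2 => x1 x'.
  transitivity (eval2 (D x') (fun x2 x3 => (fun z => m (S (m x1 y)) z) (m x2 (S x3)))) => //.
  by rewrite (eval2_antipoder _ (G := fun z => m (S (m x1 y)) z)) ?mulA1 //; linearity.
by rewrite (eval2_counitr _ (G := fun z => S (m z y))) //; linearity.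
Qed.

Lemma antipode_conv_mulS x y : antipode_conv x y = m (S y) (S x).
Proof.
rewrite /antipode_conv -(eval2_coassoc x (g := fun x1 x2 x3 =>
    eval2 (D y) (fun y1 y' => eval2 (D y') (fun y2 y3 =>
      m (m (S (m x1 y1)) (m x2 y2)) (m (S y3) (S x3)))))); last by linearity.
transitivity (eval2 (D x) (fun x12 x3 =>
    eval2 (D y) (fun y12 y3 => (ep x12 * ep y12) *: m (S y3) (S x3)))).
  apply: eq_eval2 => x12 x3.
  transitivity (eval2 (D x12) (fun x1 x2 => eval2 (D y) (fun y12 y3 =>
      eval2 (D y12) (fun y1 y2 => m (m (S (m x1 y1)) (m x2 y2)) (m (S y3) (S x3)))))).
    apply: eq_eval2 => x1 x2.
    by rewrite -(eval2_coassoc y (g := fun y1 y2 y3 =>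
      m (m (S (m x1 y1)) (m x2 y2)) (m (S y3) (S x3)))) //; linearity.
  rewrite eval2C; apply: eq_eval2 => y12 y3.
  rewrite -(eval2_mul2 _ _ (f := fun p q => m (m (S p) q) (m (S y3) (S x3)))); last by linearity.
  rewrite -DeltaM (eval2_antipodel _ (G := fun z => m z (m (S y3) (S x3)))); last by linearity.
  by rewrite epsM mul1A.
transitivity (eval2 (D x) (fun x12 x3 => ep x12 *: (fun z => m (S y) (S z)) x3)).
  apply: eq_eval2 => x12 x3.
  transitivity (eval2 (D y) (fun y12 y3 =>
      ep y12 *: (fun z => ep x12 *: m (S z) (S x3)) y3)).
    by apply: eq_eval2 => y12 y3; rewrite scalerA mulrC.
  by rewrite (eval2_counitl _ (G := fun z => ep x12 *: m (S z) (S x3))) //; linearity.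
by rewrite (eval2_counitl _ (G := fun z => m (S y) (S z))) //; linearity.
Qed.

Lemma SantM x y : S (m x y) = m (S y) (S x).
Proof. by rewrite -antipode_conv_Smul antipode_conv_mulS. Qed.

Lemma eval2_antipoder_Sinv V a (G : A -> V) : linear G ->
  eval2 (D a) (fun p q => G (m q (Sinv p))) = ep a *: G one.
Proof.
move=> hG; rewrite -(eval2_comp _ _ hG) -(linearfZ hG); congr (G _).
apply: (can_inj SantK); rewrite (eval2_comp _ _ linear_Sant) (linearfZ linear_Sant) Sant1.
by rewrite -antipoder; apply: eq_eval2 => p q; rewrite SantM SinvK.
Qed.

Lemma mul2A T1 T2 T3 : mul2 H (mul2 H T1 T2) T3 = mul2 H T1 (mul2 H T2 T3).
Proof.
apply: eval2_inj => f hf.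
rewrite eval2_mul2; last by linearity.
rewrite eval2_mul2; last by linearity.
rewrite eval2_mul2 //; apply: eq_eval2 => x y; rewrite eval2_mul2; last by linearity.
by apply: eq_eval2 => p q; apply: eq_eval2 => r s; rewrite !mulAA.
Qed.

Lemma mul12 T : mul2 H (one2 H) T = T.
Proof.
apply: eval2_inj => f hf; rewrite eval2_mul2 // eval2_one2; last by linearity.
by apply: eq_eval2 => x y; rewrite !mul1A.
Qed.

Lemma mul21 T : mul2 H T (one2 H) = T.
Proof.
apply: eval2_inj => f hf; rewrite eval2_mul2 //; apply: eq_eval2 => x y.
by rewrite eval2_one2 ?mulA1 //; linearity.
Qed.

Section Quasitriangular.
Variables R Rinv : 'M[K]_n.
Hypotheses (mul2_R_Rinv : mul2 H R Rinv = one2 H) (mul2_Rinv_R : mul2 H Rinv R = one2 H).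
Hypothesis Delta_op : forall a, (D a)^T = mul2 H (mul2 H R (D a)) Rinv.
Hypothesis Delta_id_R : Delta_id H R = mul3 H (leg13 H R) (leg23 H R).
Hypothesis id_Delta_R : id_Delta H R = mul3 H (leg13 H R) (leg12 H R).

Lemma mul2_R_Delta a : mul2 H R (D a) = mul2 H (D a)^T R.
Proof. by rewrite Delta_op mul2A mul2_Rinv_R mul21. Qed.

Lemma eval2_Delta_id_R V (g : A -> A -> A -> V) : trilin g ->
  eval2 R (fun x y => eval2 (D x) (fun p q => g p q y)) =
  eval2 R (fun x y => eval2 R (fun x' y' => g x x' (m y y'))).
Proof.
move=> hg; rewrite -eval3_Delta_id // Delta_id_R eval3_mul3 // eval3_leg13; last by linearity.
apply: eq_eval2 => x y; rewrite eval3_leg23; last by linearity.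
by apply: eq_eval2 => x' y'; rewrite mulA1 mul1A.
Qed.

Lemma eval2_id_Delta_R V (g : A -> A -> A -> V) : trilin g ->
  eval2 R (fun x y => eval2 (D y) (fun p q => g x p q)) =
  eval2 R (fun x y => eval2 R (fun x' y' => g (m x x') y' y)).
Proof.
move=> hg; rewrite -eval3_id_Delta // id_Delta_R eval3_mul3 // eval3_leg13; last by linearity.
apply: eq_eval2 => x y; rewrite eval3_leg12; last by linearity.
by apply: eq_eval2 => x' y'; rewrite mulA1 mul1A.
Qed.

Lemma eval2_eval2_tens V T (F G : A -> A) (g : A -> A -> V) : bilin g ->
  eval2 (eval2 T (fun x y => tens (F x) (G y))) g = eval2 T (fun x y => g (F x) (G y)).
Proof.
move=> hg; rewrite (eval2_comp _ _ (linear_eval2_tensor g)).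
by apply: eq_eval2 => x y; rewrite eval2_tens.
Qed.

Lemma mul2_tens_one_epsR1 :
  mul2 H (tens one (eval2 R (fun x y => ep x *: y))) R = R.
Proof.
rewrite -(eval2_tensK (mul2 H _ _)) eval2_mul2; last exact: bilin_tens.
rewrite eval2_tens; last by linearity.
transitivity (eval2 R (fun x y => eval2 R (fun x' y' => ep x *: tens x' (m y y')))).
  rewrite eval2C; apply: eq_eval2 => x' y'.
  rewrite mul1A (eval2_comp _ _ (linear_tensr x' (linear_mulAl y' (@linearf_id _ A)))).
  by apply: eq_eval2 => x y; rewrite mulAZl tensZr.
rewrite -(eval2_Delta_id_R (g := fun p q r => ep p *: tens q r)); last by linearity.
rewrite -[RHS]eval2_tensK; apply: eq_eval2 => x y.
by rewrite (eval2_counitl _ (G := fun z => tens z y)) //; linearity.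
Qed.

Lemma mul2_tens_epsR2_one :
  mul2 H (tens (eval2 R (fun x y => ep y *: x)) one) R = R.
Proof.
rewrite -(eval2_tensK (mul2 H _ _)) eval2_mul2; last exact: bilin_tens.
rewrite eval2_tens; last by linearity.
transitivity (eval2 R (fun x y => eval2 R (fun x' y' => ep y *: tens (m x x') y'))).
  rewrite eval2C; apply: eq_eval2 => x' y'.
  rewrite mul1A (eval2_comp _ _ (linear_tensl y' (linear_mulAl x' (@linearf_id _ A)))).
  by apply: eq_eval2 => x y; rewrite mulAZl tensZl.
rewrite -(eval2_id_Delta_R (g := fun p q r => ep r *: tens p q)); last by linearity.
rewrite -[RHS]eval2_tensK; apply: eq_eval2 => x y.
by rewrite (eval2_counitr _ (G := fun z => tens x z)) //; linearity.
Qed.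

Lemma eps_R1 : eval2 R (fun x y => ep x *: y) = one.
Proof.
have one2E : one2 H = tens one (eval2 R (fun x y => ep x *: y)).
  by rewrite -mul2_R_Rinv -{1}mul2_tens_one_epsR1 mul2A mul2_R_Rinv mul21.
have := congr1 (fun T => eval2 T (fun x y => ep x *: y)) one2E.
by rewrite /= eval2_one2 ?eval2_tens ?eps1 ?scale1r //; linearity.
Qed.

Lemma eps_R2 : eval2 R (fun x y => ep y *: x) = one.
Proof.
have one2E : one2 H = tens (eval2 R (fun x y => ep y *: x)) one.
  by rewrite -mul2_R_Rinv -{1}mul2_tens_epsR2_one mul2A mul2_R_Rinv mul21.
have := congr1 (fun T => eval2 T (fun x y => ep y *: x)) one2E.
by rewrite /= eval2_one2 ?eval2_tens ?eps1 ?scale1r //; linearity.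
Qed.

Definition R_S_id := eval2 R (fun x y => tens (S x) y).
Definition R_id_Sinv := eval2 R (fun x y => tens x (Sinv y)).

Lemma mul2_R_R_id_Sinv : mul2 H R R_id_Sinv = one2 H.
Proof.
apply: eval2_inj => f hf; rewrite eval2_mul2 // eval2_one2 //.
transitivity (eval2 R (fun x y => eval2 R (fun x' y' => f (m x x') (m y (Sinv y'))))).
  by apply: eq_eval2 => x y; rewrite /R_id_Sinv eval2_eval2_tens //; linearity.
rewrite -(eval2_id_Delta_R (g := fun a b c => f a (m c (Sinv b)))); last by linearity.
transitivity (eval2 R (fun x y => ep y *: f x one)).
  apply: eq_eval2 => x y.
  by rewrite (eval2_antipoder_Sinv _ (G := fun z => f x z)) //; linearity.
rewrite -{2}eps_R2 (eval2_comp _ _ (hf.1 one)).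
by apply: eq_eval2 => x y; rewrite (linearfZ (hf.1 one)).
Qed.

Lemma mul2_R_S_id_R : mul2 H R_S_id R = one2 H.
Proof.
apply: eval2_inj => f hf; rewrite eval2_mul2 // eval2_one2 //.
rewrite /R_S_id eval2_eval2_tens; last by linearity.
rewrite -(eval2_Delta_id_R (g := fun a b c => f (m (S a) b) c)); last by linearity.
transitivity (eval2 R (fun x y => ep x *: f one y)).
  apply: eq_eval2 => x y.
  by rewrite (eval2_antipodel _ (G := fun z => f z y)) //; linearity.
rewrite -{3}eps_R1 (eval2_comp _ _ (hf.2 one)).
by apply: eq_eval2 => x y; rewrite (linearfZ (hf.2 one)).
Qed.

Lemma R_S_id_Rinv : R_S_id = Rinv.
Proof. by rewrite -[R_S_id]mul21 -mul2_R_Rinv -mul2A mul2_R_S_id_R mul12. Qed.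

Lemma R_id_Sinv_Rinv : R_id_Sinv = Rinv.
Proof. by rewrite -[R_id_Sinv]mul12 -mul2_Rinv_R mul2A mul2_R_R_id_Sinv mul21. Qed.

Lemma eval2_R_S_id V (f : A -> A -> V) : bilin f ->
  eval2 R (fun x y => f (S x) y) = eval2 R (fun x y => f x (Sinv y)).
Proof.
move=> hf; rewrite -eval2_eval2_tens // -/R_S_id R_S_id_Rinv.
by rewrite -R_id_Sinv_Rinv /R_id_Sinv eval2_eval2_tens.
Qed.

Lemma eval2_R_SS V (f : A -> A -> V) : bilin f ->
  eval2 R (fun x y => f (S x) (S y)) = eval2 R f.
Proof.
move=> hf; rewrite (eval2_R_S_id (f := fun x y => f x (S y))); last by linearity.
by apply: eq_eval2 => x y; rewrite SinvK.
Qed.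

Local Notation u := (drinfeld_u H R).

Lemma drinfeld_uE : u = eval2 R (fun x y => m (S y) x).
Proof. by []. Qed.

Lemma drinfeld_u_twist a : eval2 (D a) (fun x1 x2 => m (S x2) (m u x1)) = ep a *: u.
Proof.
transitivity (eval2 (D a) (fun x1 x2 =>
    eval2 R (fun p q => (fun p q => m (S q) p) (m p x1) (m q x2)))).
  apply: eq_eval2 => x1 x2.
  rewrite drinfeld_uE (eval2_comp (F := fun z => m (S x2) (m z x1))); last by linearity.
  by apply: eq_eval2 => p q; rewrite SantM !mulAA.
rewrite eval2C -(eval2_mul2 _ _ (f := fun p q => m (S q) p)); last by linearity.
rewrite mul2_R_Delta eval2_mul2 ?eval2_tr; last by linearity.
transitivity (eval2 (D a) (fun x1 x2 =>
    (fun z => eval2 R (fun p q => m (S q) (m z p))) (m (S x1) x2))).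
  by apply: eq_eval2 => x1 x2; apply: eq_eval2 => p q; rewrite SantM !mulAA.
rewrite (eval2_antipodel _ (G := fun z => eval2 R (fun p q => m (S q) (m z p))));
  last by linearity.
by rewrite drinfeld_uE; congr (_ *: _); apply: eq_eval2 => p q; rewrite mul1A.
Qed.

Lemma drinfeld_uM x : m u x = m (S (S x)) u.
Proof.
have -> : m u x = eval2 (D x) (fun x1 x' =>
    eval2 (D x') (fun x2 x3 => m (S (S x3)) (m (S x2) (m u x1)))).
  rewrite -(eval2_counitr _ (G := fun z => m u z)); last by linearity.
  apply: eq_eval2 => x1 x'.
  transitivity (eval2 (D x') (fun x2 x3 => (fun z => m (S z) (m u x1)) (m x2 (S x3)))).
    by rewrite (eval2_antipoder _ (G := fun z => m (S z) (m u x1))) ?Sant1 ?mul1A //; linearity.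
  by apply: eq_eval2 => x2 x3; rewrite SantM mulAA.
rewrite -(eval2_coassoc x (g := fun x1 x2 x3 => m (S (S x3)) (m (S x2) (m u x1))));
  last by linearity.
transitivity (eval2 (D x) (fun x12 x3 => ep x12 *: m (S (S x3)) u)).
  apply: eq_eval2 => x12 x3.
  rewrite -(eval2_comp (F := fun z => m (S (S x3)) z)); last by linearity.
  by rewrite drinfeld_u_twist mulAZr.
by rewrite (eval2_counitl _ (G := fun z => m (S (S z)) u)) //; linearity.
Qed.

Definition drinfeld_uinv := eval2 R (fun x y => m y (S (S x))).
Local Notation uinv := drinfeld_uinv.

Lemma mulA_uinv_u : m uinv u = one.
Proof.
rewrite /uinv (eval2_comp (F := fun z => m z u)); last by linearity.
transitivity (eval2 R (fun x y => eval2 R (fun p q => m (m y (S q)) (m p x)))).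
  apply: eq_eval2 => x y.
  rewrite mulAA -drinfeld_uM drinfeld_uE (eval2_comp (F := fun z => m y (m z x)));
    last by linearity.
  by apply: eq_eval2 => p q; rewrite !mulAA.
rewrite eval2C.
transitivity (eval2 (mul2 H R R_id_Sinv) (fun p q => m (S q) p)).
  rewrite eval2_mul2; last by linearity.
  apply: eq_eval2 => p q; rewrite /R_id_Sinv eval2_eval2_tens; last by linearity.
  by apply: eq_eval2 => x y; rewrite SantM SinvK.
by rewrite mul2_R_R_id_Sinv eval2_one2 ?Sant1 ?mul1A //; linearity.
Qed.

Definition Suinv := eval2 R (fun x y => m (S (S x)) y).

Lemma Sant_uinv : S uinv = Suinv.
Proof.
rewrite /uinv /Suinv (eval2_comp _ _ linear_Sant).
rewrite -(eval2_R_SS (f := fun x y => m (S (S x)) y)); last by linearity.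
by apply: eq_eval2 => x y; rewrite SantM.
Qed.

Lemma transm_SE b : transm_S H R b = eval2 R (fun x y => m (S x) (m (S b) (m Suinv y))).
Proof.
have -> : transm_S H R b =
    eval2 R (fun x y => eval2 (D x) (fun p q => m (S (m (m (S p) b) q)) y)) by [].
rewrite (eval2_Delta_id_R (g := fun p q r => m (S (m (m (S p) b) q)) r)); last by linearity.
rewrite eval2C; apply: eq_eval2 => x' y'.
rewrite /Suinv (eval2_comp (F := fun z => m (S x') (m (S b) (m z y')))); last by linearity.
by apply: eq_eval2 => x y; rewrite !SantM !mulAA.
Qed.

Section Ribbon.
Variable v : A.
Hypothesis vC : forall a, m v a = m a v.
Hypothesis Sant_v : S v = v.
Hypothesis mul_uSu_v2 : m (m u (S u)) (m v v) = one.
Hypothesis Delta_v : D v = mul2 H (tens v v) (monodromy H R).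
Local Notation v2 := (m v v).

Lemma v2C a : m v2 a = m a v2.
Proof. by rewrite mulAA vC -mulAA vC mulAA. Qed.

Lemma mulA_v2_mid a b : m a (m v2 b) = m v2 (m a b).
Proof. by rewrite -mulAA -v2C mulAA. Qed.

Lemma mulA_v_mid a b : m a (m v b) = m v (m a b).
Proof. by rewrite -mulAA -vC mulAA. Qed.

Lemma uinvE : uinv = m (S u) v2.
Proof. by rewrite -[uinv]mulA1 -mul_uSu_v2 !mulAA -(mulAA uinv u) mulA_uinv_u mul1A. Qed.

Lemma mulA_u_uinv : m u uinv = one.
Proof. by rewrite uinvE -mulAA mul_uSu_v2. Qed.

Lemma Sant2_u : S (S u) = u.
Proof.
have := congr1 (fun z => m z uinv) (drinfeld_uM u).
by rewrite /= !mulAA mulA_u_uinv !mulA1; move/esym.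
Qed.

Lemma mulA_Su_Suinv : m (S u) Suinv = one.
Proof. by rewrite -Sant_uinv -SantM mulA_uinv_u Sant1. Qed.

Lemma mulA_Suinv_Su : m Suinv (S u) = one.
Proof. by rewrite -Sant_uinv -SantM mulA_u_uinv Sant1. Qed.

(* S^2 is conjugation by u, hence also by S(u)^-1 = Suinv. *)
Lemma Sant2_Suinv y : m (S (S y)) Suinv = m Suinv y.
Proof.
have := congr1 S (drinfeld_uM (Sinv y)); rewrite !SantM !SinvK => SuM.
transitivity (m (m Suinv (S u)) (m (S (S y)) Suinv)); first by rewrite mulA_Suinv_Su mul1A.
by rewrite !mulAA -(mulAA (S u)) -SuM !mulAA mulA_Su_Suinv mulA1.
Qed.

Lemma SuinvE : Suinv = m v2 u.
Proof. by rewrite -Sant_uinv uinvE !SantM Sant_v Sant2_u. Qed.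

Lemma mulA_S_Suinv_Suinv : m (S Suinv) Suinv = v2.
Proof.
have u_Su_comm : m u (S u) = m (S u) u by rewrite drinfeld_uM Sant2_u.
rewrite {1}SuinvE !SantM Sant_v SuinvE -v2C mulAA mulA_v2_mid -u_Su_comm.
by rewrite (v2C (m u (S u))) mul_uSu_v2 mulA1.
Qed.

Lemma transm_S2E a : transm_S H R (transm_S H R a) =
  eval2 R (fun x y => eval2 R (fun x' y' => m v2 (m (S x) (m (S y') (m a (m x' y)))))).
Proof.
rewrite transm_SE transm_SE; apply: eq_eval2 => x y.
rewrite (eval2_comp _ _ linear_Sant).
rewrite (eval2_comp (F := fun z => m (S x) (m z (m Suinv y)))); last by linearity.
apply: eq_eval2 => x' y'; rewrite !SantM !mulAA.
rewrite -[m (S (S x')) (m Suinv y)]mulAA Sant2_Suinv mulAA.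
rewrite -[m (S (S a)) (m Suinv _)]mulAA Sant2_Suinv mulAA.
by rewrite -[m (S Suinv) (m Suinv _)]mulAA mulA_S_Suinv_Suinv !mulA_v2_mid.
Qed.

Lemma right_adjE a : right_adj H v a =
  eval2 R (fun x y => eval2 R (fun x' y' => m v2 (m (S x) (m (S y') (m a (m x' y)))))).
Proof.
have -> : right_adj H v a = eval2 (D v) (fun p q => m (m (S p) a) q) by [].
rewrite Delta_v /monodromy eval2_mul2; last by linearity.
rewrite eval2_tens; last by linearity.
rewrite eval2_mul2 ?eval2_tr; last by linearity.
rewrite [RHS]eval2C; apply: eq_eval2 => x y; apply: eq_eval2 => x' y'.
by rewrite !SantM Sant_v !mulAA (mulA_v_mid a) -!(mulAA v v) !mulA_v2_mid.
Qed.

Lemma transm_S2_right_adj a : transm_S H R (transm_S H R a) = right_adj H v a.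
Proof. by rewrite transm_S2E right_adjE. Qed.

End Ribbon.
End Quasitriangular.
End HopfAxioms.
End Coordinates.

Theorem mainTheorem6 (K : fieldType) (n : nat) (H : HopfData K n)
  (R : 'M[K]_n) (v : 'rV[K]_n) :
  is_hopf H -> quasitriangular H R -> factorizable H R -> ribbon H R v ->
  forall a : 'rV[K]_n, transm_S H R (transm_S H R a) = right_adj H v a.
Proof.
move=> [mulAA [unit [coassoc [counit [[DeltaM Delta1] [[epsM eps1] [antipode Sant_bij]]]]]]].
case: Sant_bij => Sinv SantK SinvK.
move=> [[Rinv [mul2_R_Rinv mul2_Rinv_R Delta_op]] [Delta_id_R id_Delta_R]].
move=> _ [vC [_ [Sant_v [_ [[mul_uSu_v2 _] Delta_v]]]]] a.
apply: (transm_S2_right_adj SantK SinvK mulAA _ _ coassoc _ _ DeltaM Delta1 epsM eps1 _ _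
  mul2_R_Rinv mul2_Rinv_R Delta_op Delta_id_R id_Delta_R vC Sant_v mul_uSu_v2 Delta_v).
- by move=> x; case: (unit x).
- by move=> x; case: (unit x).
- by move=> x; case: (counit x).
- by move=> x; case: (counit x).
- by move=> x; case: (antipode x).
- by move=> x; case: (antipode x).
Qed.
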